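(* Let $G=PSL_2(\mathbb R)\times PSL_2(\mathbb R)$ and $H=\{(x,x):x\in PSL_2(\mathbb R)\}$. For every $\lambda\in\mathbb R\setminus\{0,1\}$ the set $\{(\exp X,\exp(\lambda X)):X\in sl_2(\mathbb R)\}\subseteq G$ (the exponential image of $\mathbf m_\lambda=\{(X,\lambda X):X\in sl_2(\mathbb R)\}$) is not the image $\sigma(G/H)$ of a global sharply transitive section $\sigma:G/H\to G$.
   Context: A section $\sigma:G/H\to G$ with $\sigma(H)=1$ is sharply transitive if $\sigma(G/H)$ is a set of representatives of the left cosets of $H$ and for any cosets $aH,bH$ there is exactly one $z\in\sigma(G/H)$ with $zaH=bH$. Here $\exp$ denotes the exponential map $sl_2(\mathbb R)\to SL_2(\mathbb R)$ followed by the projection to $PSL_2(\mathbb R)$. The subspaces $\mathbf m_\lambda$, $\lambda\in\mathbb R\setminus\{0,1\}$, are complements to the diagonal Lie algebra $\mathbf h=\{(X,X)\}$ in $sl_2(\mathbb R)\oplus sl_2(\mathbb R)$ satisfying $[\mathbf h,\mathbf m_\lambda]\subseteq\mathbf m_\lambda$. *)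

From Stdlib Require Import Reals Factorial.
Open Scope R_scope.

Record M2 := mkM2 { m11 : R; m12 : R; m21 : R; m22 : R }.

Definition mmul (A B : M2) : M2 :=
  mkM2 (m11 A * m11 B + m12 A * m21 B) (m11 A * m12 B + m12 A * m22 B)
       (m21 A * m11 B + m22 A * m21 B) (m21 A * m12 B + m22 A * m22 B).
Definition mid : M2 := mkM2 1 0 0 1.
Definition mopp (A : M2) : M2 := mkM2 (- m11 A) (- m12 A) (- m21 A) (- m22 A).
Definition mscal (c : R) (A : M2) : M2 := mkM2 (c * m11 A) (c * m12 A) (c * m21 A) (c * m22 A).
Definition mdet (A : M2) : R := m11 A * m22 A - m12 A * m21 A.
Definition mtr (A : M2) : R := m11 A + m22 A.
(* adjugate = inverse for determinant-one matrices *)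
Definition madj (A : M2) : M2 := mkM2 (m22 A) (- m12 A) (- m21 A) (m11 A).

Fixpoint mpow (A : M2) (n : nat) : M2 :=
  match n with O => mid | S k => mmul A (mpow A k) end.

Definition in_sl2 (X : M2) : Prop := mtr X = 0.

Definition exp_is (X E : M2) : Prop :=
  forall f : M2 -> R, (f = m11 \/ f = m12 \/ f = m21 \/ f = m22) ->
    Un_cv (fun n => sum_f_R0 (fun k => f (mpow X k) / INR (fact k)) n) (f E).

(* SL_2(R) and PSL_2(R) = SL_2(R)/{+-I}: an element of PSL_2(R) is represented
   by a matrix of SL_2(R); two representatives denote the same element iff
   they agree up to sign. *)
Definition in_SL2 (A : M2) : Prop := mdet A = 1.
Definition peq (A B : M2) : Prop := A = B \/ A = mopp B.

(* G = PSL_2(R) x PSL_2(R), represented by pairs of SL_2(R) matrices *)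
Definition Gt := (M2 * M2)%type.
Definition inG (g : Gt) : Prop := in_SL2 (fst g) /\ in_SL2 (snd g).
Definition Geq (g h : Gt) : Prop := peq (fst g) (fst h) /\ peq (snd g) (snd h).
Definition Gmul (g h : Gt) : Gt := (mmul (fst g) (fst h), mmul (snd g) (snd h)).
Definition Ginv (g : Gt) : Gt := (madj (fst g), madj (snd g)).
Definition G1 : Gt := (mid, mid).

Definition inH (g : Gt) : Prop := inG g /\ peq (fst g) (snd g).

Definition same_coset (g g' : Gt) : Prop := inH (Gmul (Ginv g) g').

(* A section sigma : G/H -> G is modelled as a map on representatives that
   only depends on the left coset gH and returns an element of gH. *)
Definition is_section (sigma : Gt -> Gt) : Prop :=
  (forall g, inG g -> inG (sigma g) /\ same_coset g (sigma g)) /\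
  (forall g g', inG g -> inG g' -> same_coset g g' -> Geq (sigma g) (sigma g')).

Definition in_image (sigma : Gt -> Gt) (z : Gt) : Prop :=
  exists g, inG g /\ Geq z (sigma g).

Definition sharply_transitive_section (sigma : Gt -> Gt) : Prop :=
  is_section sigma /\
  Geq (sigma G1) G1 /\
  (forall a b, inG a -> inG b ->
     (exists z, in_image sigma z /\ same_coset (Gmul z a) b) /\
     (forall z z', in_image sigma z -> in_image sigma z' ->
        same_coset (Gmul z a) b -> same_coset (Gmul z' a) b -> Geq z z')).

Definition exp_m (lam : R) (g : Gt) : Prop :=
  exists X E1 E2, in_sl2 X /\ exp_is X E1 /\ exp_is (mscal lam X) E2 /\
    Geq g (E1, E2).

(* Sharp transitivity forces σ(G/H) to meet every conjugate a H a^-1 only in the identity: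
   if z lies in σ(G/H) and a^-1 z a ∈ H, then the cosets z a H and 1 a H coincide, so z = 1.
   Each exp(m_λ) contains a nontrivial element of such a conjugate.  For λ > 0 the pair
   (exp N, exp λN), N = [[0,1],[0,0]], is conjugated into H by (diag(λ^-1/2, λ^1/2), 1).
   For λ < 0, with J = [[0,-1],[1,0]] and c = π/(1-λ), the pair (exp cJ, exp λcJ) equals
   (R_c, -R_c), which already lies in H since PSL_2 identifies R_c with -R_c. *)
From Stdlib Require Import Reals Factorial Lra Lia Cos_rel Ratan.
Open Scope R_scope.

Definition Xr (t : R) : M2 := mkM2 0 (- t) t 0.
Definition Rot (t : R) : M2 := mkM2 (cos t) (- sin t) (sin t) (cos t).
Definition Xn (s : R) : M2 := mkM2 0 s 0 0.
Definition Un (s : R) : M2 := mkM2 1 s 0 1.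
Definition mzero : M2 := mkM2 0 0 0 0.

Lemma mmul_mid_l A : mmul mid A = A.
Proof. destruct A; unfold mmul, mid; simpl; f_equal; ring. Qed.

Lemma mmul_mid_r A : mmul A mid = A.
Proof. destruct A; unfold mmul, mid; simpl; f_equal; ring. Qed.

Lemma madj_mid : madj mid = mid.
Proof. unfold madj, mid; simpl; f_equal; ring. Qed.

Lemma mopp_involutive A : mopp (mopp A) = A.
Proof. destruct A; unfold mopp; simpl; f_equal; ring. Qed.

Lemma mdet_mul A B : mdet (mmul A B) = mdet A * mdet B.
Proof. destruct A, B; unfold mdet, mmul; simpl; ring. Qed.

Lemma madj_mul_l A : mdet A = 1 -> mmul (madj A) A = mid.
Proof.
  destruct A; unfold mdet, mmul, madj, mid; simpl; intro H; f_equal;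
    try rewrite <- H; ring.
Qed.

Lemma peq_mid_offdiag A : peq A mid -> m12 A = 0 /\ m21 A = 0.
Proof. intros [-> | ->]; simpl; lra. Qed.

Lemma inG_G1 : inG G1.
Proof. split; unfold in_SL2, mdet, G1, mid; simpl; ring. Qed.

Lemma inG_Gmul g h : inG g -> inG h -> inG (Gmul g h).
Proof.
  intros [Hg1 Hg2] [Hh1 Hh2]; split; unfold in_SL2 in *; simpl;
    rewrite mdet_mul; [rewrite Hg1, Hh1 | rewrite Hg2, Hh2]; ring.
Qed.

Lemma Gmul_G1_l g : Gmul G1 g = g.
Proof. destruct g; unfold Gmul, G1; simpl; rewrite !mmul_mid_l; reflexivity. Qed.

Lemma Ginv_mul_l g : inG g -> Gmul (Ginv g) g = G1.
Proof.
  destruct g as [A B]; intros [HA HB]; unfold Gmul, Ginv, G1; simpl.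
  rewrite (madj_mul_l A HA), (madj_mul_l B HB); reflexivity.
Qed.

Lemma Gconj_G1 g : Gmul (Ginv G1) (Gmul g G1) = g.
Proof.
  destruct g; unfold Gmul, Ginv, G1; simpl.
  rewrite madj_mid, !mmul_mid_l, !mmul_mid_r; reflexivity.
Qed.

Lemma Geq_refl g : Geq g g.
Proof. split; left; reflexivity. Qed.

Lemma peq_sym A B : peq A B -> peq B A.
Proof. intros [-> | ->]; [left | right; rewrite mopp_involutive]; reflexivity. Qed.

Lemma Geq_sym g h : Geq g h -> Geq h g.
Proof. intros [H1 H2]; split; apply peq_sym; assumption. Qed.

Lemma inH_diag A : in_SL2 A -> inH (A, A).
Proof. intro HA; split; [split; assumption | left; reflexivity]. Qed.

Lemma inH_opp_diag A : in_SL2 A -> inH (A, mopp A).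
Proof.
  intro HA; split.
  - split; [exact HA |]. unfold in_SL2 in *; rewrite <- HA.
    destruct A; unfold mdet, mopp; simpl; ring.
  - right; symmetry; apply mopp_involutive.
Qed.

Definition meets_conj_H_nontrivially (S : Gt -> Prop) : Prop :=
  exists z a, inG z /\ inG a /\ S z /\ inH (Gmul (Ginv a) (Gmul z a)) /\ ~ Geq z G1.

Lemma meets_conj_H_nontrivially_mono (S T : Gt -> Prop) :
  (forall z, inG z -> S z -> T z) -> meets_conj_H_nontrivially S -> meets_conj_H_nontrivially T.
Proof.
  intros HST (z & a & Hz & Ha & HS & Hconj & Hnt).
  exists z, a; split; [exact Hz |]; split; [exact Ha |].
  split; [apply HST; assumption | split; assumption].
Qed.

Lemma sharply_transitive_image_not_meets_conj_H_nontrivially sigma :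
  sharply_transitive_section sigma -> ~ meets_conj_H_nontrivially (in_image sigma).
Proof.
  intros [_ [Hs1 Htr]] (z & a & Hz & Ha & Hzi & Hconj & Hnt).
  assert (Hza : inG (Gmul z a)) by (apply inG_Gmul; assumption).
  assert (HG1 : in_image sigma G1).
  { exists G1; split; [exact inG_G1 | apply Geq_sym; exact Hs1]. }
  apply Hnt, (proj2 (Htr a (Gmul z a) Ha Hza) z G1 Hzi HG1).
  - unfold same_coset; rewrite (Ginv_mul_l _ Hza).
    apply inH_diag; exact (proj1 inG_G1).
  - unfold same_coset; rewrite Gmul_G1_l; exact Hconj.
Qed.

Lemma Un_cv_interleave (P C : nat -> R) l :
  (forall i, P (2 * i)%nat = C i) -> (forall i, P (S (2 * i)) = C i) ->
  Un_cv C l -> Un_cv P l.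
Proof.
  intros Hev Hod HC eps Heps.
  destruct (HC eps Heps) as [N HN].
  exists (2 * N)%nat; intros n Hn.
  destruct (Nat.Even_or_Odd n) as [[i ->] | [i ->]].
  - rewrite Hev; apply HN; lia.
  - replace (2 * i + 1)%nat with (S (2 * i)) by lia.
    rewrite Hod; apply HN; lia.
Qed.

Lemma sum_f_R0_even_support (u : nat -> R) i :
  (forall k, u (S (2 * k)) = 0) ->
  sum_f_R0 u (2 * i) = sum_f_R0 (fun k => u (2 * k)%nat) i.
Proof.
  intro Hodd; induction i as [| i IH]; [reflexivity |].
  replace (2 * S i)%nat with (S (S (2 * i))) by lia.
  rewrite tech5, tech5, IH, Hodd, (tech5 _ i).
  replace (S (S (2 * i))) with (2 * S i)%nat by lia; ring.
Qed.

Lemma sum_f_R0_odd_support (u : nat -> R) i :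
  (forall k, u (2 * k)%nat = 0) ->
  sum_f_R0 u (S (2 * i)) = sum_f_R0 (fun k => u (S (2 * k))) i.
Proof.
  intro Hev; induction i as [| i IH].
  - simpl; rewrite (Hev 0%nat : u 0%nat = 0); ring.
  - replace (S (2 * S i)) with (S (S (S (2 * i)))) by lia.
    rewrite tech5, tech5, IH, (tech5 _ i).
    replace (S (S (2 * i))) with (2 * S i)%nat by lia.
    rewrite Hev; replace (S (2 * S i)) with (S (S (S (2 * i)))) by lia; ring.
Qed.

Lemma Un_cv_series_even (u : nat -> R) l :
  (forall k, u (S (2 * k)) = 0) ->
  Un_cv (sum_f_R0 (fun k => u (2 * k)%nat)) l -> Un_cv (sum_f_R0 u) l.
Proof.
  intro Hodd; apply Un_cv_interleave; intro i.
  - apply sum_f_R0_even_support; exact Hodd.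
  - rewrite tech5, Hodd, Rplus_0_r; apply sum_f_R0_even_support; exact Hodd.
Qed.

Lemma Un_cv_series_odd (u : nat -> R) l :
  (forall k, u (2 * k)%nat = 0) ->
  Un_cv (sum_f_R0 (fun k => u (S (2 * k)))) l -> Un_cv (sum_f_R0 u) l.
Proof.
  intros Hev Hv; apply (CV_shift _ 1).
  apply (Un_cv_interleave _ (sum_f_R0 (fun k => u (S (2 * k))))); [| | exact Hv];
    intro i.
  - rewrite Nat.add_1_r; apply sum_f_R0_odd_support; exact Hev.
  - replace (S (2 * i) + 1)%nat with (2 * S i)%nat by lia.
    rewrite <- (Rplus_0_r (sum_f_R0 _ i)), <- (Hev (S i)).
    replace (2 * S i)%nat with (S (S (2 * i))) by lia.
    rewrite tech5; f_equal; apply sum_f_R0_odd_support; exact Hev.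
Qed.

Lemma mpow_Xr_even t i : mpow (Xr t) (2 * i) = mscal ((-1) ^ i * t ^ (2 * i)) mid.
Proof.
  induction i as [| i IH].
  - simpl; unfold mscal, mid; simpl; f_equal; ring.
  - replace (2 * S i)%nat with (S (S (2 * i))) by lia.
    cbn [mpow]; rewrite IH; unfold mmul, mscal, Xr, mid; simpl; f_equal; ring.
Qed.

Lemma mpow_Xr_odd t i : mpow (Xr t) (S (2 * i)) = mscal ((-1) ^ i * t ^ (2 * i)) (Xr t).
Proof.
  cbn [mpow]; rewrite mpow_Xr_even; unfold mmul, mscal, Xr, mid; simpl; f_equal; ring.
Qed.

Lemma exp_Xr t : exp_is (Xr t) (Rot t).
Proof.
  assert (Hcos : forall f : M2 -> R, f = m11 \/ f = m22 ->
    Un_cv (sum_f_R0 (fun k => f (mpow (Xr t) k) / INR (fact k))) (cos t)).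
  { intros f Hf; apply Un_cv_series_even.
    - intro k; rewrite mpow_Xr_odd; destruct Hf as [-> | ->]; simpl; unfold Rdiv; ring.
    - apply (Un_cv_ext (A1 t)); [| apply A1_cvg].
      intro n; apply sum_eq; intros k _; rewrite mpow_Xr_even.
      destruct Hf as [-> | ->]; simpl; unfold Rdiv; ring. }
  assert (Hsin : forall (f : M2 -> R) s, (f = m21 /\ s = 1) \/ (f = m12 /\ s = -1) ->
    Un_cv (sum_f_R0 (fun k => f (mpow (Xr t) k) / INR (fact k))) (s * sin t)).
  { intros f s Hf; apply Un_cv_series_odd.
    - intro k; rewrite mpow_Xr_even; destruct Hf as [[-> _] | [-> _]]; simpl;
        unfold Rdiv; ring.
    - apply (Un_cv_ext (fun n => s * B1 t n));
        [| apply (CV_mult (fun _ => s)); [intros e He; exists 0%nat; intros;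
             rewrite R_dist_eq; exact He | apply B1_cvg]].
      intro n; unfold B1; rewrite scal_sum; apply sum_eq; intros k _.
      rewrite mpow_Xr_odd; replace (2 * k + 1)%nat with (S (2 * k)) by lia.
      destruct Hf as [[-> ->] | [-> ->]]; simpl; unfold Rdiv; ring. }
  intros f [-> | [-> | [-> | ->]]].
  - apply Hcos; left; reflexivity.
  - replace (m12 (Rot t)) with (-1 * sin t) by (simpl; ring).
    apply Hsin; right; split; reflexivity.
  - replace (m21 (Rot t)) with (1 * sin t) by (simpl; ring).
    apply Hsin; left; split; reflexivity.
  - apply Hcos; right; reflexivity.
Qed.

Lemma mpow_square_zero X k : mmul X X = mzero -> mpow X (S (S k)) = mzero.
Proof.
  intro HX; induction k as [| k IH].
  - cbn [mpow]; rewrite mmul_mid_r; exact HX.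
  - change (mpow X (S (S (S k)))) with (mmul X (mpow X (S (S k)))).
    rewrite IH; unfold mmul, mzero; simpl; f_equal; ring.
Qed.

Lemma exp_square_zero X :
  mmul X X = mzero -> exp_is X (mkM2 (1 + m11 X) (m12 X) (m21 X) (1 + m22 X)).
Proof.
  intros HX f Hf.
  assert (Hsum : forall n,
    sum_f_R0 (fun k => f (mpow X k) / INR (fact k)) (S n) = f mid + f X).
  { induction n as [| n IH].
    - cbn [sum_f_R0 mpow]; rewrite mmul_mid_r; simpl; field.
    - rewrite tech5, IH, mpow_square_zero by exact HX.
      destruct Hf as [-> | [-> | [-> | ->]]]; simpl; unfold Rdiv; ring. }
  replace (f (mkM2 (1 + m11 X) (m12 X) (m21 X) (1 + m22 X))) with (f mid + f X)
    by (destruct Hf as [-> | [-> | [-> | ->]]]; simpl; ring).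
  intros eps Heps; exists 1%nat; intros [| n] Hn; [lia |].
  rewrite Hsum, R_dist_eq; exact Heps.
Qed.

Lemma exp_Xn s : exp_is (Xn s) (Un s).
Proof.
  replace (Un s) with (mkM2 (1 + m11 (Xn s)) (m12 (Xn s)) (m21 (Xn s)) (1 + m22 (Xn s)))
    by (unfold Un, Xn; simpl; f_equal; ring).
  apply exp_square_zero; unfold mmul, Xn, mzero; simpl; f_equal; ring.
Qed.

Lemma mdet_Rot t : mdet (Rot t) = 1.
Proof. unfold mdet, Rot; simpl; pose proof (sin2_cos2 t) as H; unfold Rsqr in H; lra. Qed.

Lemma Rot_sub_PI t : Rot (t - PI) = mopp (Rot t).
Proof.
  unfold Rot, mopp; rewrite cos_minus, sin_minus, cos_PI, sin_PI; simpl; f_equal; ring.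
Qed.

Lemma exp_m_meets_conj_H_nontrivially_pos lam : 0 < lam -> meets_conj_H_nontrivially (exp_m lam).
Proof.
  intro Hlam.
  set (d := sqrt lam).
  assert (Hd : 0 < d) by (apply sqrt_lt_R0; exact Hlam).
  assert (Hdd : d * d = lam) by (apply sqrt_sqrt; lra).
  exists (Un 1, Un lam), (mkM2 (/ d) 0 0 d, mid).
  split; [| split; [| split; [| split]]].
  - split; unfold in_SL2, mdet, Un; simpl; ring.
  - split; unfold in_SL2, mdet, mid; simpl; [field; lra | ring].
  - exists (Xn 1), (Un 1), (Un lam); split; [| split; [| split]].
    + unfold in_sl2, mtr, Xn; simpl; ring.
    + apply exp_Xn.
    + replace (mscal lam (Xn 1)) with (Xn lam)
        by (unfold mscal, Xn; simpl; f_equal; ring).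
      apply exp_Xn.
    + apply Geq_refl.
  - replace (Gmul (Ginv (mkM2 (/ d) 0 0 d, mid)) (Gmul (Un 1, Un lam) (mkM2 (/ d) 0 0 d, mid)))
      with (Un lam, Un lam).
    + apply inH_diag; unfold in_SL2, mdet, Un; simpl; ring.
    + unfold Gmul, Ginv, Un, mmul, madj, mid; simpl.
      f_equal; f_equal; rewrite <- ?Hdd; field; lra.
  - intros [H _]; apply peq_mid_offdiag in H; simpl in H; lra.
Qed.

Lemma exp_m_meets_conj_H_nontrivially_neg lam : lam < 0 -> meets_conj_H_nontrivially (exp_m lam).
Proof.
  intro Hlam.
  set (c := PI / (1 - lam)).
  pose proof PI_RGT_0 as Hpi.
  assert (Hc : lam * c = c - PI) by (unfold c; field; lra).
  assert (Hc_pos : 0 < c) by (unfold c; apply Rdiv_lt_0_compat; lra).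
  assert (Hc_lt : c < PI)
    by (unfold c; apply (Rmult_lt_reg_r (1 - lam)); [lra | field_simplify; nra]).
  exists (Rot c, Rot (lam * c)), G1.
  split; [| split; [| split; [| split]]].
  - split; apply mdet_Rot.
  - exact inG_G1.
  - exists (Xr c), (Rot c), (Rot (lam * c)); split; [| split; [| split]].
    + unfold in_sl2, mtr, Xr; simpl; ring.
    + apply exp_Xr.
    + replace (mscal lam (Xr c)) with (Xr (lam * c))
        by (unfold mscal, Xr; simpl; f_equal; ring).
      apply exp_Xr.
    + apply Geq_refl.
  - rewrite Gconj_G1, Hc, Rot_sub_PI; apply inH_opp_diag, mdet_Rot.
  - intros [H _]; apply peq_mid_offdiag in H; simpl in H.
    assert (0 < sin c) by (apply sin_gt_0; assumption); lra.
Qed.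

(* [h1] is unused: the argument for [lam > 0] covers [lam = 1] as well. *)
Theorem proposition8 (lam : R) (h0 : lam <> 0) (h1 : lam <> 1) :
  ~ exists sigma : Gt -> Gt,
      sharply_transitive_section sigma /\
      (forall z, inG z -> (in_image sigma z <-> exp_m lam z)).
Proof.
  intros [sigma [Hst Himg]].
  apply (sharply_transitive_image_not_meets_conj_H_nontrivially sigma Hst).
  apply (meets_conj_H_nontrivially_mono (exp_m lam)).
  - intros z Hz; apply Himg; exact Hz.
  - destruct (Rlt_or_le 0 lam) as [Hpos | Hle].
    + apply exp_m_meets_conj_H_nontrivially_pos; exact Hpos.
    + apply exp_m_meets_conj_H_nontrivially_neg; lra.
Qed.
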